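(* For $n\ge1$ and $k\ge1$, let $\overline{\sigma}^k_n=(\sigma^k_n,n)$ be the sequence $\sigma^k_n$ followed by one additional term $n$ (this sequence has $k^nn!$ terms), and let $\mathrm{avg}(n,k)$ be the arithmetic mean of its terms. Then $$\mathrm{avg}(n,k)=\sum_{j=0}^{n-1}\frac{1}{k^j\,j!},$$ and consequently $\mathrm{avg}(n,k)<e^{1/k}$.
   Context: The sequence $\sigma^k_n$ of positive integers is defined recursively by $\sigma^k_1=1^{k-1}$ (the value $1$ repeated $k-1$ times; empty if $k=1$) and, for $n>1$, $\sigma^k_n=(\sigma^k_{n-1},n)^{kn-1},\sigma^k_{n-1}$, i.e. $kn-1$ copies of the block ''$\sigma^k_{n-1}$ followed by $n$'', followed by one more copy of $\sigma^k_{n-1}$. *)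

From mathcomp Require Import all_boot all_order all_algebra.
From mathcomp Require Import all_classical all_reals all_analysis.
Set Implicit Arguments. Unset Strict Implicit. Unset Printing Implicit Defensive.
Import Order.TTheory GRing.Theory Num.Theory.

(* sigma k n = \sigma^k_n  (for n >= 1; sigma k 0 = [::] is an unused dummy).
   sigma^k_1 = 1^{k-1};
   sigma^k_n = (sigma^k_{n-1}, n)^{kn-1}, sigma^k_{n-1}. *)
Fixpoint sigma (k n : nat) : seq nat :=
  match n with
  | 0 => [::]
  | m.+1 =>
      if m is 0 then nseq k.-1 1
      else flatten (nseq (k * n - 1) (rcons (sigma k m) n)) ++ sigma k m
  end.

Definition sigmabar (k n : nat) : seq nat := rcons (sigma k n) n.

Definition avg_seq {R : realType} (s : seq nat) : R :=
  ((sumn s)%:R / (size s)%:R)%R.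

Definition avg {R : realType} (n k : nat) : R := avg_seq (sigmabar k n).

From mathcomp Require Import all_boot all_order all_algebra.
From mathcomp Require Import all_classical all_reals all_analysis.
From mathcomp Require Import ring.
Import Order.TTheory GRing.Theory Num.Theory.

(* The proof rests on one structural observation: appending the final term
   n+1 to sigma^k_{n+1} completes its last block, so that
     sigmabar^k_{n+1} = (sigma^k_n, n+1)^{k(n+1)},
   i.e. sigmabar^k_{n+1} is k(n+1) copies of the sequence sigmabar^k_n with
   its last term increased by one.  Writing L_n and S_n for the length and
   the sum of sigmabar^k_n, this gives
     L_{n+1} = k(n+1) L_n   and   S_{n+1} = k(n+1) (S_n + 1),
   hence L_n = k^n n! and avg(n+1,k) = avg(n,k) + 1/L_n, starting from
   sigmabar^k_1 = 1^k with average 1.  Telescoping yields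
   avg(n,k) = sum_{j<n} 1/(k^j j!), which is a partial sum of the exponential
   series at x = 1/k, and partial sums of that series with positive terms are
   strictly below expR x. *)

Lemma nseqS_rcons (T : Type) (c : nat) (x : T) : nseq c.+1 x = rcons (nseq c x) x.
Proof. by elim: c => //= c <-. Qed.

Lemma size_flatten_nseq (T : Type) (c : nat) (s : seq T) :
  size (flatten (nseq c s)) = (size s * c)%N.
Proof. by rewrite size_flatten /shape map_nseq sumn_nseq. Qed.

Lemma sumn_flatten_nseq (c : nat) (s : seq nat) :
  sumn (flatten (nseq c s)) = (sumn s * c)%N.
Proof. by rewrite sumn_flatten map_nseq sumn_nseq. Qed.

Lemma sigmabar1 (k : nat) : (1 <= k)%N -> sigmabar k 1 = nseq k 1%N.
Proof. by case: k => // k _; rewrite /sigmabar /= -nseqS_rcons. Qed.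

Lemma sigmabarS (k n : nat) : (1 <= k)%N ->
  sigmabar k n.+2 = flatten (nseq (k * n.+2) (rcons (sigma k n.+1) n.+2)).
Proof.
move=> hk; have [c hc] : exists c, (k * n.+2 = c.+1)%N.
  by exists (k * n.+2).-1; rewrite prednK // muln_gt0 hk.
rewrite /sigmabar [sigma k n.+2]/= hc subn1 succnK.
by rewrite nseqS_rcons flatten_rcons rcons_cat.
Qed.

Lemma size_sigmabarS (k n : nat) : (1 <= k)%N ->
  size (sigmabar k n.+2) = (size (sigmabar k n.+1) * (k * n.+2))%N.
Proof. by move=> hk; rewrite sigmabarS // size_flatten_nseq !size_rcons. Qed.

Lemma sumn_sigmabarS (k n : nat) : (1 <= k)%N ->
  sumn (sigmabar k n.+2) = ((sumn (sigmabar k n.+1)).+1 * (k * n.+2))%N.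
Proof.
by move=> hk; rewrite sigmabarS // sumn_flatten_nseq !sumn_rcons addnS.
Qed.

Lemma size_sigmabar (k n : nat) : (1 <= k)%N ->
  size (sigmabar k n.+1) = (k ^ n.+1 * n.+1`!)%N.
Proof.
move=> hk; elim: n => [|n IH]; first by rewrite sigmabar1 // size_nseq muln1.
by rewrite size_sigmabarS // IH [k ^ n.+2]expnS [n.+2`!]factS; ring.
Qed.

Local Open Scope ring_scope.

Lemma ratio_scale (R : realType) (S L c : nat) : c != 0%N ->
  ((S * c)%:R / (L * c)%:R : R) = S%:R / L%:R.
Proof.
move=> c0; have cR : c%:R != 0 :> R by rewrite pnatr_eq0.
by rewrite !natrM invfM mulrACA divff // mulr1.
Qed.

Section Average.
Variables (R : realType) (k : nat).
Hypothesis hk : (1 <= k)%N.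

Lemma avg1 : avg (R := R) 1 k = 1.
Proof.
rewrite /avg /avg_seq sigmabar1 // sumn_nseq size_nseq mul1n divff //.
by rewrite pnatr_eq0 -lt0n.
Qed.

Lemma avgS (n : nat) :
  avg (R := R) n.+2 k = avg n.+1 k + ((k ^ n.+1 * n.+1`!)%:R)^-1.
Proof.
rewrite /avg /avg_seq sumn_sigmabarS // size_sigmabarS // ratio_scale.
  by rewrite -size_sigmabar // -natr1 mulrDl mul1r.
by rewrite muln_eq0 negb_or -!lt0n hk.
Qed.

Lemma avg_sum (n : nat) :
  avg (R := R) n.+1 k = \sum_(j < n.+1) ((k ^ j * j`!)%:R)^-1.
Proof.
elim: n => [|n IH]; first by rewrite avg1 big_ord1 expn0 invr1.
by rewrite avgS IH [in RHS]big_ord_recr.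
Qed.

End Average.

(* For x > 0, every partial sum of the exponential series is below expR x:
   the partial sums increase strictly and converge to expR x. *)
Lemma exp_partial_sum_lt (R : realType) (x : R) (n : nat) :
  0 < x -> series (exp_coeff x) n < expR x.
Proof.
move=> x0; apply: (@lt_le_trans _ _ (series (exp_coeff x) n.+1)).
  by rewrite seriesSr ltrDl /exp_coeff /= divr_gt0 ?exprn_gt0 ?ltr0n ?fact_gt0.
apply: nondecreasing_cvgn_le; last exact: is_cvg_series_exp_coeff.
apply: (@nondecreasing_series R (exp_coeff x) xpredT 0) => m _ _.
exact/exp_coeff_ge0/ltW.
Qed.

Lemma sum_exp_coeff_inv (R : realType) (k n : nat) :
  \sum_(j < n) ((k ^ j * j`!)%:R)^-1 = series (exp_coeff (k%:R^-1 : R)) n.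
Proof.
rewrite seriesEord; apply: eq_bigr => j _.
by rewrite /exp_coeff /= natrM invfM exprVn natrX.
Qed.

Theorem lemma8 (R : realType) (n k : nat) (hn : (1 <= n)%N) (hk : (1 <= k)%N) :
  size (sigmabar k n) = (k ^ n * n`!)%N /\
  avg (R := R) n k = \sum_(j < n) ((k ^ j * j`!)%:R)^-1 /\
  avg (R := R) n k < expR (k%:R^-1).
Proof.
case: n hn => [//|n] _.
have ha := @avg_sum R k hk n.
split; first exact: size_sigmabar.
split; first exact: ha.
rewrite ha sum_exp_coeff_inv; apply: exp_partial_sum_lt.
by rewrite invr_gt0 ltr0n.
Qed.
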